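(* Let $\mathbb{R}^n$ and $\mathbb{R}^m$ be equipped with arbitrary norms $\|\cdot\|$, with dual norms $\|\cdot\|_*$, and let $g:\mathbb{R}^n\to\mathbb{R}^m$, $y\in\mathbb{R}^m$, $\rho>0$, $L>0$, $\mu_0>0$. Let $B=\{x\in\mathbb{R}^n:\|x\|\le\rho\}$. Assume $g(0)=0$, $g$ is differentiable in $B$ with $\|g'(x^a)-g'(x^b)\|\le L\|x^a-x^b\|$ for all $x^a,x^b\in B$, and $\|g'(0)^T h\|_*\ge\mu_0\|h\|_*$ for all $h\in\mathbb{R}^m$. Let $r^*=\min\{\rho,\frac{\mu_0}{2L}\}$ and suppose $\|y\|\le(\mu_0-Lr^* )r^*$. Then there exists a solution $x^*$ of $g(x)=y$ with $\|x^*\|\le r^*$.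
   Context: For a vector $c$, the dual norm is $\|c\|_*=\sup_{\|x\|=1}(c,x)$. The norm of $g'(x)$ is the operator norm subordinate to the chosen vector norms. *)

From HB Require Import structures.
From mathcomp Require Import all_boot all_order all_algebra.
From mathcomp Require Import all_classical all_reals.
Set Implicit Arguments. Unset Strict Implicit. Unset Printing Implicit Defensive.
Import Order.TTheory GRing.Theory Num.Theory.
Local Open Scope ring_scope.
Local Open Scope classical_set_scope.

Definition is_norm (R : realType) (n : nat) (N : 'cV[R]_n -> R) : Prop :=
  [/\ forall x, 0 <= N x,
      forall x, N x = 0 -> x = 0,
      forall (a : R) x, N (a *: x) = `|a| * N x
    & forall x y, N (x + y) <= N x + N y].

Definition pairing (R : realType) (n : nat) (c x : 'cV[R]_n) : R :=
  \sum_(i < n) c i ord0 * x i ord0.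

Definition dual_norm (R : realType) (n : nat) (N : 'cV[R]_n -> R) (c : 'cV[R]_n) : R :=
  sup [set pairing c x | x in [set x | N x = 1]].

Definition op_norm (R : realType) (m n : nat)
    (Nm : 'cV[R]_m -> R) (Nn : 'cV[R]_n -> R) (A : 'M[R]_(m, n)) : R :=
  sup [set Nm (A *m x) | x in [set x | Nn x = 1]].

Definition has_fderiv (R : realType) (m n : nat)
    (Nm : 'cV[R]_m -> R) (Nn : 'cV[R]_n -> R)
    (g : 'cV[R]_n -> 'cV[R]_m) (x : 'cV[R]_n) (A : 'M[R]_(m, n)) : Prop :=
  forall eps : R, 0 < eps -> exists2 delta : R, 0 < delta &
    forall z, Nn z < delta -> Nm (g (x + z) - g x - A *m z) <= eps * Nn z.

From HB Require Import structures.
From mathcomp Require Import all_boot all_order all_algebra.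
From mathcomp Require Import all_classical all_reals.
Import Order.TTheory GRing.Theory Num.Theory.
Local Open Scope ring_scope.
From mathcomp Require Import all_analysis.
Import numFieldNormedType.Exports.
From mathcomp Require Import ring lra.
Local Open Scope classical_set_scope.

(* Minimise the merit function x |-> ||g x - y|| + theta ||x|| over the closed
   ball of radius r = min(rho, mu0 / (2 L)), where the concave penalty
   theta s = c s - L s^2 / 2 satisfies theta r > (mu0 - L r) r >= ||y||, so
   that the minimiser xb is interior.  Since ||g'(xb) - g'(0)|| <= L ||xb||,
   the dual bound on g'(0)^T passes to g'(xb)^T with the constant
   mu = mu0 - L ||xb||, and a separation argument based on least squares
   shows that g'(xb) maps the unit ball onto the ball of radius mu.  A step
   from xb towards a preimage of y - g xb then lowers the residual faster
   than it raises theta, whose slope c - L ||xb|| is below mu; hence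
   g xb = y. *)

Section LipschitzContinuity.
Context {K : realFieldType} {V W : normedModType K}.

Lemma near_dist_lt (x : V) (e : K) : 0 < e -> \forall y \near x, `|y - x| < e.
Proof.
by move=> e0; near=> y; rewrite distrC; near: y; apply: cvgr_dist_lt.
Unshelve. all: by end_near. Qed.

Lemma near_lipschitz_continuous (f : V -> W) (x : V) (k : K) :
  (\forall y \near x, `|f y - f x| <= k * `|y - x|) -> {for x, continuous f}.
Proof.
move=> fk; apply/cvgrPdist_lt => e e0.
have k1 : 0 < `|k| + 1 by rewrite ltr_wpDl.
have kk1 : k <= `|k| + 1 by apply: le_trans (ler_norm k) _; rewrite lerDl.
near=> y.
have fky : `|f y - f x| <= k * `|y - x| by near: y; exact: fk.
rewrite distrC; apply: le_lt_trans fky _.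
apply: le_lt_trans (ler_wpM2r (normr_ge0 _) kk1) _.
rewrite -ltr_pdivlMl // mulrC.
by near: y; apply: near_dist_lt; rewrite divr_gt0.
Unshelve. all: by end_near. Qed.

Lemma lipschitz_continuous (f : V -> W) (k : K) :
  (forall x y, `|f x - f y| <= k * `|x - y|) -> continuous f.
Proof. by move=> fk x; apply: (@near_lipschitz_continuous _ _ k); apply: nearW. Qed.

End LipschitzContinuity.

Lemma entry_le_mx_norm {R : realDomainType} {p q : nat} (A : 'M[R]_(p, q)) i j :
  `|A i j| <= `|A|.
Proof.
rewrite [leRHS]/Num.Def.normr /= mx_normrE.
exact: (le_bigmax _ (fun ij : 'I_p * 'I_q => `|A ij.1 ij.2|) (i, j)).
Qed.

Lemma mx_norm_le {R : realDomainType} {p q : nat} (A : 'M[R]_(p, q)) M :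
  0 <= M -> (forall i j, `|A i j| <= M) -> `|A| <= M.
Proof.
move=> M0 AM; rewrite [leLHS]/Num.Def.normr /= mx_normrE.
by apply: bigmax_le => // ij _; apply: AM.
Qed.

Lemma mx_norm_trmx {R : realDomainType} {p q : nat} (A : 'M[R]_(p, q)) :
  `|A^T| = `|A|.
Proof.
apply/le_anti/andP; split; apply: mx_norm_le => // i j.
  by rewrite mxE entry_le_mx_norm.
by rewrite -{1}[A]trmxK mxE entry_le_mx_norm.
Qed.

Lemma mx_norm_mulmx {R : realDomainType} {p q s : nat}
    (A : 'M[R]_(p, q)) (B : 'M[R]_(q, s)) :
  `|A *m B| <= q%:R * (`|A| * `|B|).
Proof.
apply: mx_norm_le => [|i j]; first by rewrite !mulr_ge0.
rewrite mxE; apply: le_trans (ler_norm_sum _ _ _) _.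
apply: le_trans (_ : _ <= \sum_(k < q) `|A| * `|B|) _.
  by apply: ler_sum => k _; rewrite normrM ler_pM // entry_le_mx_norm.
by rewrite sumr_const card_ord mulr_natl.
Qed.

Lemma cV_bounded_closed_compact {R : realType} {n : nat} (A : set 'cV[R]_n) M :
  (forall x, A x -> `|x| <= M) -> closed A -> compact A.
Proof.
move=> AM cA.
have trmx_cont : continuous (@trmx R 1 n).
  by apply: (@lipschitz_continuous _ _ _ _ 1) => x y; rewrite -linearB mx_norm_trmx mul1r.
have -> : A = (@trmx R 1 n) @` ((@trmx R 1 n) @^-1` A).
  by apply/seteqP; split => [x Ax|_ [v Av <-]] //; exists x^T; rewrite /= trmxK.
apply: continuous_compact; first exact: continuous_subspaceT trmx_cont.
apply: bounded_closed_compact; last by move/continuous_closedP: trmx_cont; apply.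
rewrite /bounded_set /bounded_near; near=> M' => v Av /=.
rewrite -mx_norm_trmx; apply: le_trans (AM _ Av) _.
by near: M'; apply: nbhs_pinfty_ge; apply: num_real.
Unshelve. all: by end_near. Qed.

Section IsNorm.
Context {R : realType} {n : nat} {N : 'cV[R]_n -> R} (hN : is_norm N).
Implicit Types x y : 'cV[R]_n.

Lemma is_norm_ge0 x : 0 <= N x. Proof. by case: hN. Qed.

Lemma is_norm_eq0 x : N x = 0 -> x = 0. Proof. by case: hN => _ + _ _; apply. Qed.

Lemma is_normZ a x : N (a *: x) = `|a| * N x. Proof. by case: hN. Qed.

Lemma is_normD x y : N (x + y) <= N x + N y. Proof. by case: hN. Qed.

Lemma is_norm0 : N 0 = 0. Proof. by rewrite -(scale0r 0) is_normZ normr0 mul0r. Qed.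

Lemma is_normN x : N (- x) = N x.
Proof. by rewrite -scaleN1r is_normZ normrN normr1 mul1r. Qed.

Lemma is_norm_distC x y : N (x - y) = N (y - x). Proof. by rewrite -is_normN opprB. Qed.

Lemma is_norm_gt0 x : x != 0 -> 0 < N x.
Proof.
by move=> x0; rewrite lt_def is_norm_ge0 andbT; exact: contra_neq (@is_norm_eq0 x) x0.
Qed.

Lemma is_norm_ler_dist_dist x y : `|N x - N y| <= N (x - y).
Proof.
have := is_normD (x - y) y; have := is_normD (y - x) x.
rewrite !subrK is_norm_distC ler_norml => ? ?; apply/andP; split; lra.
Qed.

Lemma is_norm_le_mx_norm : exists2 b, 0 <= b & forall x, N x <= b * `|x|.
Proof.
exists (\sum_i N (delta_mx i 0)) => [|x]; first by apply: sumr_ge0 => *; apply: is_norm_ge0.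
have {1}-> : x = \sum_i x i 0 *: delta_mx i 0.
  by rewrite [LHS]matrix_sum_delta; apply: eq_bigr => i _; rewrite big_ord1.
apply: le_trans (_ : _ <= \sum_i N (x i 0 *: delta_mx i 0)) _.
  elim/big_ind2: _ => [|a b c d ab cd|//]; first by rewrite is_norm0.
  exact: le_trans (is_normD _ _) (lerD ab cd).
rewrite mulr_suml; apply: ler_sum => i _; rewrite is_normZ mulrC ler_wpM2l //.
  exact: is_norm_ge0.
exact: entry_le_mx_norm.
Qed.

Lemma is_norm_continuous : continuous N.
Proof.
have [b b0 Nb] := is_norm_le_mx_norm.
apply: (@lipschitz_continuous _ _ _ _ b) => x y.
exact: le_trans (is_norm_ler_dist_dist x y) (Nb _).
Qed.

Lemma mx_norm_le_is_norm : exists2 a, 0 < a & forall x, `|x| <= a * N x.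
Proof.
have [[x0 x00]|all0] := pselect (exists x0 : 'cV[R]_n, x0 != 0); last first.
  exists 1 => // x; have -> : x = 0 by apply: contra_notP all0 => x0; exists x; apply/eqP.
  by rewrite normr0 is_norm0 mulr0.
have S0 : [set x : 'cV[R]_n | `|x| = 1] !=set0.
  by exists (`|x0|^-1 *: x0); rewrite /= normrZ normfV normr_id mulVf ?normr_eq0.
have NC : {within [set x | `|x| = 1], continuous N}.
  by apply: continuous_subspaceT; exact: is_norm_continuous.
have S_compact : compact [set x : 'cV[R]_n | `|x| = 1].
  apply: (@cV_bounded_closed_compact _ _ _ 1); first by move=> x /= ->.
  have closed1 : closed [set t : R | t = 1] by exact: closed_eq.
  exact: (continuous_closedP _).1 (@norm_continuous _ 'cV[R]_n) _ closed1.
have [c] := compact_EVT_min S0 S_compact NC; rewrite inE /= => c1 cmin.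
have Nc : 0 < N c by apply: is_norm_gt0; rewrite -normr_eq0 c1 oner_neq0.
exists (N c)^-1 => [|x]; first by rewrite invr_gt0.
have [->|x_neq0] := eqVneq x 0; first by rewrite normr0 is_norm0 mulr0.
have x_gt0 : 0 < `|x| by rewrite normr_gt0.
have := cmin (`|x|^-1 *: x); rewrite !inE /= normrZ normfV normr_id mulVf ?gt_eqF //.
rewrite is_normZ normfV normr_id ler_pdivlMl // => /(_ erefl) Ncx.
by rewrite ler_pdivlMl // mulrC.
Qed.

Lemma is_norm_ball_min (r : R) (f : 'cV[R]_n -> R) :
  0 <= r -> {within [set x | N x <= r], continuous f} ->
  exists2 c, N c <= r & forall x, N x <= r -> f c <= f x.
Proof.
move=> r0 fC; have [a a0 Na] := mx_norm_le_is_norm.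
have B0 : [set x | N x <= r] !=set0 by exists 0; rewrite /= is_norm0.
have B_compact : compact [set x | N x <= r].
  apply: (@cV_bounded_closed_compact _ _ _ (a * r)).
    by move=> x /= Nx; apply: le_trans (Na x) _; rewrite ler_pM2l.
  have closed_r : closed [set t : R | t <= r] by exact: closed_le.
  exact: (continuous_closedP _).1 is_norm_continuous _ closed_r.
have [c] := compact_EVT_min B0 B_compact fC; rewrite inE => Nc cmin.
by exists c => // x Nx; apply: cmin; rewrite inE.
Qed.

End IsNorm.

Section Pairing.
Context {R : realType} {n : nat}.
Implicit Types c d x y : 'cV[R]_n.

Lemma pairingE c x : pairing c x = (c^T *m x) 0 0.
Proof. by rewrite /pairing mxE; apply: eq_bigr => i _; rewrite mxE. Qed.

Lemma pairingC c x : pairing c x = pairing x c.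
Proof. by apply: eq_bigr => i _; rewrite mulrC. Qed.

Lemma pairingDr c x y : pairing c (x + y) = pairing c x + pairing c y.
Proof. by rewrite !pairingE mulmxDr mxE. Qed.

Lemma pairingZr c a x : pairing c (a *: x) = a * pairing c x.
Proof. by rewrite !pairingE -scalemxAr mxE. Qed.

Lemma pairing0r c : pairing c 0 = 0.
Proof. by rewrite -(scale0r 0) pairingZr mul0r. Qed.

Lemma pairingNr c x : pairing c (- x) = - pairing c x.
Proof. by rewrite -scaleN1r pairingZr mulN1r. Qed.

Lemma pairingBr c x y : pairing c (x - y) = pairing c x - pairing c y.
Proof. by rewrite pairingDr pairingNr. Qed.

Lemma pairingBl c d x : pairing (c - d) x = pairing c x - pairing d x.
Proof. by rewrite !(pairingC _ x) pairingBr. Qed.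

Lemma pairingZl a c x : pairing (a *: c) x = a * pairing c x.
Proof. by rewrite !(pairingC _ x) pairingZr. Qed.

Lemma pairing_ge0 x : 0 <= pairing x x.
Proof. by apply: sumr_ge0 => i _; rewrite -expr2 sqr_ge0. Qed.

Lemma pairing_gt0 x : x != 0 -> 0 < pairing x x.
Proof.
move=> x0; rewrite lt_def pairing_ge0 andbT.
apply: contra_neq x0 => /eqP.
rewrite psumr_eq0 => [/allP x0|i _]; last by rewrite -expr2 sqr_ge0.
apply/matrixP => i j; rewrite (ord1 j) mxE.
by apply/eqP; have := x0 i (mem_index_enum _); rewrite /= mulf_eq0 orbb.
Qed.

Lemma pairing_sqrB c d t :
  pairing (c - t *: d) (c - t *: d) =
    pairing c c - 2 * t * pairing c d + t ^+ 2 * pairing d d.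
Proof. by rewrite !(pairingBr, pairingBl, pairingZr, pairingZl) (pairingC d c); ring. Qed.

Lemma pairing_le_mx_norm c x : pairing c x <= n%:R * (`|c| * `|x|).
Proof.
rewrite pairingE; apply: le_trans (ler_norm _) _; apply: le_trans (entry_le_mx_norm _ 0 0) _.
by apply: le_trans (mx_norm_mulmx _ _) _; rewrite mx_norm_trmx.
Qed.

Lemma pairing_continuous {T : topologicalType} (f g : T -> 'cV[R]_n) t :
  {for t, continuous f} -> {for t, continuous g} ->
  {for t, continuous (fun s => pairing (f s) (g s))}.
Proof.
move=> fC gC; rewrite /prop_for /continuous_at /pairing.
apply: (@cvg_big _ _ +%R 0 xpredT add_continuous) => // i _; apply: continuousM.
  exact: continuous_comp fC (@coord_continuous _ n 1 i 0 (f t)).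
exact: continuous_comp gC (@coord_continuous _ n 1 i 0 (g t)).
Qed.

End Pairing.

Lemma pairing_mulmx {R : realType} {m n : nat} (h : 'cV[R]_m) (A : 'M[R]_(m, n)) x :
  pairing h (A *m x) = pairing (A^T *m h) x.
Proof. by rewrite !pairingE trmx_mul trmxK mulmxA. Qed.

Section SupSphere.
Context {R : realType} {n : nat} {N : 'cV[R]_n -> R} (hN : is_norm N).

Lemma le_sup_sphere (phi : 'cV[R]_n -> R) k :
  (forall t x, 0 < t -> phi (t *: x) = t * phi x) -> (forall x, phi x <= k * N x) ->
  forall x, phi x <= sup [set phi x | x in [set x | N x = 1]] * N x.
Proof.
move=> phiZ phik x; have [->|x0] := eqVneq x 0.
  by have := phik 0; rewrite (is_norm0 hN) !mulr0.
have Nx := is_norm_gt0 hN x x0.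
have ub : has_ubound [set phi x | x in [set x | N x = 1]].
  by exists k => _ [y /= Ny <-]; rewrite -[k]mulr1 -Ny; apply: phik.
rewrite -ler_pdivrMr // mulrC -phiZ ?invr_gt0 //; apply: (ub_le_sup ub).
by exists ((N x)^-1 *: x) => //=; rewrite (is_normZ hN) gtr0_norm ?invr_gt0 // mulVf ?gt_eqF.
Qed.

Lemma pairing_le_dual_norm c x : pairing c x <= dual_norm N c * N x.
Proof.
have [a a0 Na] := mx_norm_le_is_norm hN.
apply: (@le_sup_sphere _ (n%:R * `|c| * a)) => [t y _|y]; first exact: pairingZr.
apply: le_trans (pairing_le_mx_norm _ _) _.
by rewrite -!mulrA ler_wpM2l // ler_wpM2l // Na.
Qed.

Lemma dual_norm_le c B :
  0 <= B -> (forall x, N x = 1 -> pairing c x <= B) -> dual_norm N c <= B.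
Proof.
move=> B0 cB; rewrite /dual_norm.
have [->|ne] := eqVneq [set pairing c x | x in [set x | N x = 1]] set0; first by rewrite sup0.
by apply: ge_sup; [apply/set0P | move=> _ [x /= Nx <-]; apply: cB].
Qed.

Lemma dual_norm_ge0 c : 0 <= dual_norm N c.
Proof.
have [[x Nx]|no_unit] := pselect (exists x, N x = 1).
  have := pairing_le_dual_norm c x; have := pairing_le_dual_norm c (- x).
  by rewrite pairingNr (is_normN hN) Nx; lra.
rewrite /dual_norm (_ : [set pairing c x | x in [set x | N x = 1]] = set0) ?sup0 //.
by apply/seteqP; split => // p [x Nx _]; apply: no_unit; exists x.
Qed.

End SupSphere.

Lemma pairing_le0_of_min {R : realType} {n : nat} (c d : 'cV[R]_n) :
  (forall t, 0 < t -> t <= 1 -> pairing c c <= pairing (c - t *: d) (c - t *: d)) ->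
  pairing c d <= 0.
Proof.
move=> cmin; rewrite leNgt; apply/negP => cd0.
have dd0 := pairing_ge0 d.
set t := pairing c d / (pairing d d + pairing c d).
have s0 : 0 < pairing d d + pairing c d by lra.
have t0 : 0 < t by rewrite divr_gt0.
have t1 : t <= 1 by rewrite ler_pdivrMr // mul1r; lra.
have := cmin t t0 t1; rewrite pairing_sqrB => ct.
have tdd : t * pairing d d < pairing c d by rewrite /t mulrAC ltr_pdivrMr //; nra.
have : t * (t * pairing d d) < t * pairing c d by rewrite ltr_pM2l.
nra.
Qed.

Section NormedMaps.
Context {R : realType} {m n : nat} {Nm : 'cV[R]_m -> R} {Nn : 'cV[R]_n -> R}.
Hypotheses (hNm : is_norm Nm) (hNn : is_norm Nn).

Lemma op_norm_mulmx_le (A : 'M[R]_(m, n)) x :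
  Nm (A *m x) <= op_norm Nm Nn A * Nn x.
Proof.
have [a a0 Na] := mx_norm_le_is_norm hNn; have [b b0 Nb] := is_norm_le_mx_norm hNm.
apply: (@le_sup_sphere _ _ _ hNn _ (b * (n%:R * `|A|) * a)) => [t y t0|y].
  by rewrite -scalemxAr (is_normZ hNm) gtr0_norm.
apply: le_trans (Nb _) _; rewrite -!mulrA; apply: ler_wpM2l => //.
apply: le_trans (mx_norm_mulmx _ _) _; rewrite mulrA [leRHS]mulrA.
by apply: ler_wpM2l; [rewrite mulr_ge0 | exact: Na].
Qed.

Lemma has_fderiv_continuous g x A :
  has_fderiv Nm Nn g x A -> {for x, continuous g}.
Proof.
move=> gA; have [a a0 Na] := mx_norm_le_is_norm hNm.
have [b b0 Nb] := is_norm_le_mx_norm hNn.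
have [d d0 gd] := gA 1 ltr01.
have b1 : 0 < b + 1 by rewrite ltr_wpDl.
have near_x := near_dist_lt x _ (divr_gt0 d0 b1).
set o := `|op_norm Nm Nn A|.
apply: (@near_lipschitz_continuous _ _ _ _ _ (a * ((1 + o) * b))); near=> y.
have Nyx : Nn (y - x) < d.
  apply: le_lt_trans (Nb _) _; apply: le_lt_trans (_ : _ <= (b + 1) * `|y - x|) _.
    by rewrite ler_wpM2r // lerDl.
  rewrite -ltr_pdivlMl // mulrC.
  by near: y; exact: near_x.
have := gd _ Nyx; rewrite mul1r (_ : x + (y - x) = y) => [gyx|].
  2: by rewrite addrC subrK.
have gyx_le : Nm (g y - g x) <= (1 + o) * Nn (y - x).
  have := is_normD hNm (g y - g x - A *m (y - x)) (A *m (y - x)); rewrite subrK.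
  have := op_norm_mulmx_le A (y - x).
  have : op_norm Nm Nn A * Nn (y - x) <= o * Nn (y - x).
    by rewrite ler_wpM2r ?(is_norm_ge0 hNn) ?ler_norm.
  lra.
apply: le_trans (Na _) _; rewrite -mulrA ler_pM2l //; apply: le_trans gyx_le _.
rewrite -mulrA; apply: ler_wpM2l; [exact: addr_ge0 ler01 (normr_ge0 _) | exact: Nb].
Unshelve. all: by end_near. Qed.

Lemma least_squares_ball (A : 'M[R]_(m, n)) (p : 'cV[R]_m) :
  exists2 u0, Nn u0 <= 1 & forall u, Nn u <= 1 ->
    pairing (p - A *m u0) (A *m u) <= pairing (p - A *m u0) (A *m u0).
Proof.
have res_cont : continuous (fun u => p - A *m u).
  apply: (@lipschitz_continuous _ _ _ _ (n%:R * `|A|)) => x y.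
  by rewrite opprB addrC addrA subrK -mulmxBr -mulrA distrC mx_norm_mulmx.
have F_cont : {within [set u | Nn u <= 1],
    continuous (fun u => pairing (p - A *m u) (p - A *m u))}.
  apply: continuous_subspaceT => u.
  exact: (@pairing_continuous _ _ _ (fun u => p - A *m u) (fun u => p - A *m u) u
    (res_cont u) (res_cont u)).
have [u0 u0_le u0_min] := is_norm_ball_min hNn 1 _ ler01 F_cont.
exists u0 => // u u_le; rewrite -subr_le0 -pairingBr -mulmxBr.
apply: pairing_le0_of_min => t t0 t1.
rewrite scalemxAr -addrA -opprD -mulmxDr; apply: u0_min.
have -> : u0 + t *: (u - u0) = (1 - t) *: u0 + t *: u.
  by apply/matrixP => i j; rewrite !mxE; ring.
apply: le_trans (is_normD hNn _ _) _.
rewrite !(is_normZ hNn) ger0_norm ?subr_ge0 // gtr0_norm //; nra.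
Qed.

Lemma open_mapping (A : 'M[R]_(m, n)) mu :
  0 < mu -> (forall h, mu * dual_norm Nm h <= dual_norm Nn (A^T *m h)) ->
  forall v, exists2 u, A *m u = v & Nn u <= Nm v / mu.
Proof.
move=> mu0 Areg v; have [->|v0] := eqVneq v 0.
  by exists 0; rewrite ?mulmx0 // (is_norm0 hNn) (is_norm0 hNm) mul0r.
have Nv := is_norm_gt0 hNm v v0.
(* Rescale v to p of norm mu.  Were p outside A(unit ball), the residual of
   its least-squares approximation u0 would separate it from A(unit ball),
   against the dual bound on A^T. *)
pose p := (mu / Nm v) *: v.
have Np : Nm p = mu by rewrite (is_normZ hNm) gtr0_norm ?divr_gt0 // divfK ?gt_eqF.
have [u0 u0_le u0_max] := least_squares_ball A p.
suff Au0 : A *m u0 = p.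
  exists ((Nm v / mu) *: u0).
    by rewrite -scalemxAr Au0 scalerA mulrA divfK ?gt_eqF // mulfV ?gt_eqF // scale1r.
  have q0 : 0 <= Nm v / mu by rewrite divr_ge0 // ltW.
  by rewrite (is_normZ hNn) ger0_norm // -[leRHS]mulr1 ler_wpM2l.
apply/eqP; rewrite eq_sym -subr_eq0; apply/negPn/negP => h0.
set h := p - A *m u0 in u0_max h0 *.
have hAu0 : 0 <= pairing h (A *m u0).
  by have := u0_max 0; rewrite (is_norm0 hNn) mulmx0 pairing0r; apply.
have dual_le : dual_norm Nn (A^T *m h) <= pairing h (A *m u0).
  by apply: dual_norm_le => // x Nx; rewrite -pairing_mulmx u0_max ?Nx.
have hp : pairing h p = pairing h (A *m u0) + pairing h h.
  by rewrite -pairingDr addrC /h subrK.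
have := pairing_le_dual_norm hNm h p; have := Areg h; have := pairing_gt0 h h0.
rewrite Np; lra.
Qed.

Lemma dual_norm_perturb (A0 A : 'M[R]_(m, n)) mu beta h :
  0 <= beta -> mu * dual_norm Nm h <= dual_norm Nn (A0^T *m h) ->
  op_norm Nm Nn (A0 - A) <= beta ->
  (mu - beta) * dual_norm Nm h <= dual_norm Nn (A^T *m h).
Proof.
move=> beta0 A0reg A0A.
have D0 := dual_norm_ge0 hNm h.
suff : dual_norm Nn (A0^T *m h) <= dual_norm Nn (A^T *m h) + beta * dual_norm Nm h by lra.
apply: dual_norm_le => [|x Nx]; first by rewrite addr_ge0 ?dual_norm_ge0 ?mulr_ge0.
rewrite -pairing_mulmx -[A0](subrK A) mulmxDl pairingDr addrC.
apply: lerD.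
  by have := pairing_le_dual_norm hNn (A^T *m h) x; rewrite pairing_mulmx Nx mulr1.
apply: le_trans (pairing_le_dual_norm hNm _ _) _; rewrite mulrC ler_wpM2r //.
by apply: le_trans (op_norm_mulmx_le _ _) _; rewrite Nx mulr1.
Qed.

Lemma residual_descent g A x y u eps :
  has_fderiv Nm Nn g x A -> A *m u = y - g x -> 0 < eps ->
  exists2 t0, 0 < t0 <= 1 & forall t, 0 < t <= t0 ->
    Nm (g (x + t *: u) - y) <= (1 - t) * Nm (g x - y) + eps * t * Nn u.
Proof.
move=> gA Au eps0; have [d d0 gd] := gA eps eps0.
have Nu1 : 0 < Nn u + 1 by rewrite ltr_wpDl ?(is_norm_ge0 hNn).
exists (Num.min 1 (d / (Nn u + 1))); first by rewrite lt_min ltr01 divr_gt0 //= ge_min lexx.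
move=> t /andP[t0]; rewrite le_min => /andP[t1]; rewrite ler_pdivlMr // => td.
have Ntu : Nn (t *: u) = t * Nn u by rewrite (is_normZ hNn) gtr0_norm.
have := gd (t *: u); rewrite Ntu => /(_ ltac:(nra)) gtu.
have -> : g (x + t *: u) - y =
    (g (x + t *: u) - g x - A *m (t *: u)) + (1 - t) *: (g x - y).
  by rewrite -scalemxAr Au scalerBl scale1r; apply/matrixP => i j; rewrite !mxE; ring.
apply: le_trans (is_normD hNm _ _) _; rewrite (is_normZ hNm) ger0_norm ?subr_ge0 //; lra.
Qed.

Lemma penalized_residual_min g g' y (theta : R -> R) r :
  0 <= r -> continuous theta -> (forall x, Nn x <= r -> has_fderiv Nm Nn g x (g' x)) ->
  exists2 xb, Nn xb <= r & forall x, Nn x <= r ->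
    Nm (g xb - y) + theta (Nn xb) <= Nm (g x - y) + theta (Nn x).
Proof.
move=> r0 thetaC gD; apply: (is_norm_ball_min hNn) => //.
apply: continuous_in_subspaceT => x; rewrite inE => /gD /has_fderiv_continuous gC.
apply: continuousD.
  apply: (continuous_comp (f := fun x => g x - y)); last exact: is_norm_continuous hNm _.
  by apply: continuousB => //; exact: cst_continuous.
exact: continuous_comp (is_norm_continuous hNn x) (thetaC _).
Qed.

Lemma penalized_min_solution g A y theta r xb mu kappa :
  Nn xb < r -> has_fderiv Nm Nn g xb A ->
  (forall v, exists2 u, A *m u = v & Nn u <= Nm v / mu) ->
  0 <= kappa < mu ->
  (forall s, theta s <= theta (Nn xb) + kappa * (s - Nn xb)) ->
  (forall x, Nn x <= r -> Nm (g xb - y) + theta (Nn xb) <= Nm (g x - y) + theta (Nn x)) ->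
  g xb = y.
Proof.
move=> xb_r gA Asurj /andP[k0 kmu] theta_tan xb_min.
have mu0 : 0 < mu by apply: le_lt_trans kmu.
apply/eqP; rewrite -subr_eq0; apply/negPn/negP => w0.
have [u Au] := Asurj (y - g xb); rewrite -opprB (is_normN hNm) ler_pdivlMr // => Nu.
have U0 : 0 < Nn u.
  apply: (is_norm_gt0 hNn); apply: contra_neq w0 => u0.
  by apply/eqP; rewrite -oppr_eq0 opprB -Au u0 mulmx0.
(* Along u the residual decreases at rate ||g xb - y|| >= mu ||u|| while
   theta grows at rate at most kappa ||u||; eps splits the gap mu - kappa. *)
have eps0 : 0 < (mu - kappa) / 2 by rewrite divr_gt0 // subr_gt0.
have [t0 /andP[t0_gt0 _] descent] := residual_descent _ _ _ _ _ _ gA Au eps0.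
set s := Nn xb in xb_r theta_tan xb_min.
pose t := Num.min t0 ((r - s) / Nn u).
have t_gt0 : 0 < t by rewrite lt_min t0_gt0 divr_gt0 // subr_gt0.
have tu_le : t * Nn u <= r - s by rewrite -ler_pdivlMr // ge_min lexx orbT.
have x'_le : Nn (xb + t *: u) <= s + t * Nn u.
  by apply: le_trans (is_normD hNn _ _) _; rewrite (is_normZ hNn) gtr0_norm.
have x'_r : Nn (xb + t *: u) <= r by lra.
have dx' : Nn (xb + t *: u) - s <= t * Nn u by lra.
have kx' := ler_wpM2l k0 dx'.
have := descent t; rewrite t_gt0 ge_min lexx => /(_ erefl) desc.
have tan := theta_tan (Nn (xb + t *: u)).
have min := xb_min _ x'_r.
have Ukmu : 0 < Nn u * (mu - kappa) by rewrite mulr_gt0 // subr_gt0.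
have : t * Nm (g xb - y) <= t * (Nn u * ((mu + kappa) / 2)) by nra.
rewrite ler_pM2l //; lra.
Qed.

End NormedMaps.

Local Close Scope classical_set_scope.

Theorem corollary3 (R : realType) (n m : nat)
    (Nn : 'cV[R]_n -> R) (Nm : 'cV[R]_m -> R)
    (hNn : is_norm Nn) (hNm : is_norm Nm)
    (g : 'cV[R]_n -> 'cV[R]_m) (g' : 'cV[R]_n -> 'M[R]_(m, n))
    (y : 'cV[R]_m) (rho L mu0 : R)
    (hrho : 0 < rho) (hL : 0 < L) (hmu0 : 0 < mu0)
    (hg0 : g 0 = 0)
    (hder : forall x, Nn x <= rho -> has_fderiv Nm Nn g x (g' x))
    (hlip : forall xa xb, Nn xa <= rho -> Nn xb <= rho ->
       op_norm Nm Nn (g' xa - g' xb) <= L * Nn (xa - xb))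
    (hreg : forall h : 'cV[R]_m,
       dual_norm Nn ((g' 0)^T *m h) >= mu0 * dual_norm Nm h)
    (hy : Nm y <= (mu0 - L * Num.min rho (mu0 / (2 * L))) * Num.min rho (mu0 / (2 * L))) :
  exists xs : 'cV[R]_n, g xs = y /\ Nn xs <= Num.min rho (mu0 / (2 * L)).
Proof.
set r := Num.min rho (mu0 / (2 * L)) in hy *.
have r_gt0 : 0 < r by rewrite lt_min hrho divr_gt0 ?mulr_gt0.
have r_rho : r <= rho by rewrite ge_min lexx.
have Lr : r * (2 * L) <= mu0 by rewrite -ler_pdivlMr ?mulr_gt0 // ge_min lexx orbT.
(* Any c in (mu0 - L r / 2, mu0) works: the slope c - L s of theta at s stays
   below mu0 - L s, and theta r exceeds (mu0 - L r) r. *)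
pose c := mu0 - L * r / 4.
pose theta s := c * s - L / 2 * s ^+ 2.
have theta_cont : continuous theta.
  move=> s; apply: continuousB.
    by apply: continuousM; [exact: cst_continuous | exact: cvg_id].
  by apply: continuousM; [exact: cst_continuous | exact: exprn_continuous].
have [xb xb_r xb_min] := penalized_residual_min hNm hNn _ _ y _ _ (ltW r_gt0) theta_cont
  (fun x Nx => hder x (le_trans Nx r_rho)).
have Lrr := mulr_gt0 (mulr_gt0 hL r_gt0) r_gt0.
have xb_lt : Nn xb < r.
  rewrite lt_neqAle xb_r andbT; apply/eqP => xb_eq.
  have := xb_min 0; rewrite (is_norm0 hNn) hg0 sub0r (is_normN hNm) xb_eq.
  rewrite /theta /c => /(_ (ltW r_gt0)).
  have := is_norm_ge0 hNm (g xb - y); nra.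
set s := Nn xb in xb_r xb_lt xb_min.
have Ls : 0 <= L * s := mulr_ge0 (ltW hL) (is_norm_ge0 hNn xb).
exists xb; split; last exact: xb_r.
apply: (penalized_min_solution hNm hNn _ _ _ _ _ _ (mu0 - L * s) (c - L * s) xb_lt
  (hder xb (le_trans xb_r r_rho)) _ _ _ xb_min).
- apply: (open_mapping hNm hNn) => [|h]; first by rewrite subr_gt0; nra.
  apply: (dual_norm_perturb hNm hNn _ _ _ _ _ Ls (hreg h)).
  have := hlip 0 xb; rewrite (is_norm0 hNn) sub0r (is_normN hNn); apply.
    exact: ltW.
  exact: le_trans xb_r r_rho.
- apply/andP; split; rewrite /c; nra.
- move=> s'; have := mulr_ge0 (ltW hL) (sqr_ge0 (s' - s)); rewrite -/s /theta; nra.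
Qed.
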